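(* Let $A>0$ and let $F_k=(F_k^1,\dots,F_k^d)\in\mathbb{R}^d$, $k=1,2$, be constant vectors with $F_1^d>0$ and $F_2^d\ge0$. Define $$F(y)=\begin{cases}F_1,& y\in\Pi_1=\{y\in\mathbb{R}^d: y^d<A\},\\ F_2,& y\in\Pi_2=\{y\in\mathbb{R}^d: y^d\ge A\}.\end{cases}$$ Let $\Lambda\subset\Pi_1$ be the closure of an open connected set with piecewise smooth boundary. For $x\in\Lambda$ let $y(t,x)$ solve $\frac{d^2y}{dt^2}=F(y)$, $y(0,x)=x$, $\frac{dy}{dt}(0,x)=0$ (zero initial velocities). Then there are no collisions ($y(t,x_1)\ne y(t,x_2)$ for all $t\ge0$ and all $x_1\ne x_2$ in $\Lambda$) if and only if $F_1^d\le F_2^d$.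
   Context: $y^d$ denotes the $d$-th coordinate of $y\in\mathbb{R}^d$. *)

From Stdlib Require Import Reals.
From Coquelicot Require Import Coquelicot.
Open Scope R_scope.

(* A point of R^d is represented as a function nat -> R; only the
   coordinates 0, ..., d-1 are meaningful.  The paper's coordinate y^d
   (the last one) is index (d-1). *)
Definition pt := nat -> R.

Definition eqd (d : nat) (x y : pt) : Prop :=
  forall i, (i < d)%nat -> x i = y i.

(* sup-norm ball: |x - y|_oo < r (induces the usual topology of R^d) *)
Definition near_lt (d : nat) (x y : pt) (r : R) : Prop :=
  forall i, (i < d)%nat -> Rabs (x i - y i) < r.

Definition open_d (d : nat) (O : pt -> Prop) : Prop :=
  forall x, O x -> exists r, 0 < r /\ forall z, near_lt d x z r -> O z.

Definition closure_d (d : nat) (O : pt -> Prop) (x : pt) : Prop :=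
  forall r, 0 < r -> exists z, O z /\ near_lt d x z r.

Definition connected_d (d : nat) (O : pt -> Prop) : Prop :=
  ~ (exists U V : pt -> Prop,
        open_d d U /\ open_d d V /\
        (forall x, O x -> U x \/ V x) /\
        (forall x, O x -> U x -> V x -> False) /\
        (exists x, O x /\ U x) /\ (exists x, O x /\ V x)).

Definition Fpw (d : nat) (A : R) (F1 F2 : pt) (y : pt) : pt :=
  if Rlt_dec (y (d - 1)%nat) A then F1 else F2.

(* y : [0,oo) -> R^d solves y'' = F(y), y(0) = x, y'(0) = 0, in the
   (Caratheodory / integral) sense appropriate for a discontinuous
   right-hand side: there is a velocity v with, for all t >= 0,
     y(t) = x + \int_0^t v(s) ds   and   v(t) = \int_0^t F(y(s)) ds. *)
Definition is_solution (d : nat) (A : R) (F1 F2 : pt) (x : pt)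
  (y : R -> pt) : Prop :=
  exists v : R -> pt,
    forall t, 0 <= t -> forall i, (i < d)%nat ->
      is_RInt (fun s => v s i) 0 t (y t i - x i) /\
      is_RInt (fun s => Fpw d A F1 F2 (y s) i) 0 t (v t i).

From Stdlib Require Import Reals Lra Lia.
From Coquelicot Require Import Coquelicot.
Open Scope R_scope.

(* The solutions are explicit.  The last coordinate moves with acceleration F1^d
   until the hitting time T(x) = sqrt (2 (A - x^d) / F1^d), when it reaches the
   interface y^d = A; its velocity is then nonnegative, so it stays in Pi_2 and
   moves with acceleration F2^d.  Hence y(t,x) = x + Y(T(x), t) with Y piecewise
   quadratic in t.  If F1^d <= F2^d, the height at any time t strictly decreases
   with T, so equal positions force equal hitting times and then equal initial
   points.  If F1^d > F2^d, the particles hitting the interface at T0 - eps and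
   T0 + eps are at the same height at the time t with
   (F1^d - F2^d) (t - T0) = F1^d T0, whatever eps; shifting the second one by the
   difference of the other displacements, which is O(eps), gives two colliding
   points in any ball around a point of Omega. *)

Lemma is_RInt_eq (h : R -> R) (a b l1 l2 : R) :
  is_RInt h a b l1 -> is_RInt h a b l2 -> l1 = l2.
Proof.
  intros H1 H2.
  now rewrite <- (is_RInt_unique _ _ _ _ H1), <- (is_RInt_unique _ _ _ _ H2).
Qed.

Lemma is_RInt_split (h : R -> R) (a m b l : R) : a <= m <= b -> is_RInt h a b l ->
  exists l1 l2, is_RInt h a m l1 /\ is_RInt h m b l2 /\ l = l1 + l2.
Proof.
  intros Hm Hl.
  assert (E : ex_RInt h a b) by (exists l; exact Hl).
  assert (E1 : ex_RInt h a m) by (apply (ex_RInt_Chasles_1 h a m b); auto; lra).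
  assert (E2 : ex_RInt h m b) by (apply (ex_RInt_Chasles_2 h a m b); auto; lra).
  exists (RInt h a m), (RInt h m b).
  split; [exact (RInt_correct h a m E1) |]. split; [exact (RInt_correct h m b E2) |].
  rewrite <- (is_RInt_unique _ _ _ _ Hl). symmetry. apply (RInt_Chasles h a m b E1 E2).
Qed.

Lemma is_RInt_const_R (c a b : R) : is_RInt (fun _ => c) a b (c * (b - a)).
Proof.
  replace (c * (b - a)) with (scal (b - a) c) by (unfold scal; simpl; unfold mult; simpl; ring).
  exact (is_RInt_const (V := R_NormedModule) a b c).
Qed.

Lemma is_RInt_affine (h : R -> R) (a b p q l : R) : a <= b ->
  (forall s, a < s < b -> h s = p + q * s) -> is_RInt h a b l ->
  l = p * (b - a) + q * (b * b - a * a) / 2.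
Proof.
  intros Hab Hh Hl.
  set (G := fun s => p * s + q * s * s / 2).
  assert (HG : is_RInt (fun s => p + q * s) a b (minus (G b) (G a))).
  { apply (is_RInt_derive G).
    - intros s _. unfold G. auto_derive; [easy | field].
    - intros s _. apply (ex_derive_continuous (fun s => p + q * s)). auto_derive. easy. }
  apply is_RInt_ext with (g := h) in HG.
  2: { rewrite Rmin_left, Rmax_right by lra. intros s Hs. symmetry. apply Hh, Hs. }
  rewrite (is_RInt_eq _ _ _ _ _ Hl HG). unfold minus, plus, opp, G; simpl. field.
Qed.

Definition pw_vel (c1 c2 T t : R) : R :=
  if Rle_dec t T then c1 * t else c1 * T + c2 * (t - T).

Definition pw_pos (c1 c2 T t : R) : R :=
  if Rle_dec t T then c1 * t * t / 2
  else c1 * T * T / 2 + c1 * T * (t - T) + c2 * (t - T) * (t - T) / 2.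

Lemma is_RInt_step_fun (h : R -> R) (c1 c2 T t l : R) : 0 <= T -> 0 <= t ->
  (forall s, 0 < s < t -> s < T -> h s = c1) ->
  (forall s, 0 < s < t -> T < s -> h s = c2) ->
  is_RInt h 0 t l -> l = pw_vel c1 c2 T t.
Proof.
  intros HT Ht H1 H2 Hl. unfold pw_vel. destruct (Rle_dec t T) as [Hle | Hlt].
  - rewrite (is_RInt_affine h 0 t c1 0 l Ht); [field | | exact Hl].
    intros s Hs. rewrite H1 by lra. ring.
  - destruct (is_RInt_split h 0 T t l) as (l1 & l2 & I1 & I2 & ->); [lra | exact Hl |].
    rewrite (is_RInt_affine h 0 T c1 0 l1 HT), (is_RInt_affine h T t c2 0 l2);
      try lra; auto; intros s Hs; [rewrite H2 | rewrite H1]; lra.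
Qed.

Lemma is_RInt_pw_vel (w : R -> R) (c1 c2 T t l : R) : 0 <= T -> 0 <= t ->
  (forall s, 0 < s < t -> w s = pw_vel c1 c2 T s) ->
  is_RInt w 0 t l -> l = pw_pos c1 c2 T t.
Proof.
  intros HT Ht Hw Hl. unfold pw_pos. destruct (Rle_dec t T) as [Hle | Hlt].
  - rewrite (is_RInt_affine w 0 t 0 c1 l Ht); [field | | exact Hl].
    intros s Hs. rewrite Hw by lra. unfold pw_vel. destruct (Rle_dec s T); [ring | lra].
  - destruct (is_RInt_split w 0 T t l) as (l1 & l2 & I1 & I2 & ->); [lra | exact Hl |].
    rewrite (is_RInt_affine w 0 T 0 c1 l1 HT), (is_RInt_affine w T t (c1 * T - c2 * T) c2 l2);
      try lra; auto; intros s Hs; rewrite Hw by lra; unfold pw_vel;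
      destruct (Rle_dec s T); lra.
Qed.

Lemma pw_pos_shift_diff (c1 c2 T eps t : R) : 0 <= eps -> T + eps < t ->
  pw_pos c1 c2 (T - eps) t - pw_pos c1 c2 (T + eps) t = 2 * eps * (t - T) * (c2 - c1).
Proof.
  intros Heps Ht. unfold pw_pos.
  destruct (Rle_dec t (T - eps)); [lra |]. destruct (Rle_dec t (T + eps)); [lra |]. field.
Qed.

Lemma Rabs_pw_pos_shift_diff (c1 c2 T eps t K : R) : 0 <= eps -> T + eps < t ->
  Rabs (c2 - c1) <= K ->
  Rabs (pw_pos c1 c2 (T - eps) t - pw_pos c1 c2 (T + eps) t) <= 2 * (t - T) * K * eps.
Proof.
  intros Heps Ht HK. rewrite pw_pos_shift_diff by assumption.
  assert (Hc : 0 <= 2 * eps * (t - T)) by (apply Rmult_le_pos; lra).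
  rewrite Rabs_mult, (Rabs_pos_eq _ Hc).
  pose proof (Rmult_le_compat_l _ _ _ Hc HK). lra.
Qed.

Lemma pw_height_decreasing (f1 f2 T1 T2 t : R) :
  0 < f1 -> f1 <= f2 -> 0 <= T1 < T2 -> 0 <= t ->
  pw_pos f1 f2 T2 t - f1 * T2 * T2 / 2 < pw_pos f1 f2 T1 t - f1 * T1 * T1 / 2.
Proof.
  intros Hf1 Hf HT Ht. unfold pw_pos.
  assert (Hsq : 0 < f1 * (T2 * T2 - T1 * T1)) by (apply Rmult_lt_0_compat; nra).
  destruct (Rle_dec t T1); destruct (Rle_dec t T2); try lra.
  - assert (0 < f2 * (t - T1) * (t - T1)) by (apply Rmult_lt_0_compat; nra).
    assert (0 <= f1 * T1 * (t - T1)) by (apply Rmult_le_pos; nra).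
    assert (0 <= f1 * (T2 * T2 - t * t)) by (apply Rmult_le_pos; nra).
    lra.
  - assert (0 <= (f2 - f1) * (t - (T1 + T2) / 2)) by (apply Rmult_le_pos; lra).
    assert (0 < (T2 - T1) * ((f2 - f1) * (t - (T1 + T2) / 2) + f1 * (T1 + T2) / 2))
      by (apply Rmult_lt_0_compat; nra).
    nra.
Qed.

Lemma pw_height_crossing (f1 f2 T eps t : R) : 0 <= eps -> T + eps < t ->
  (f1 - f2) * (t - T) = f1 * T ->
  pw_pos f1 f2 (T + eps) t - f1 * (T + eps) * (T + eps) / 2 =
  pw_pos f1 f2 (T - eps) t - f1 * (T - eps) * (T - eps) / 2.
Proof.
  intros Heps Ht Hcross. pose proof (pw_pos_shift_diff f1 f2 T eps t Heps Ht).
  assert (eps * ((f1 - f2) * (t - T)) = eps * (f1 * T)) by (rewrite Hcross; reflexivity).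
  lra.
Qed.

Definition hit_time (A f a : R) : R := sqrt (2 * (A - a) / f).

Lemma hit_time_nonneg (A f a : R) : 0 <= hit_time A f a.
Proof. apply sqrt_pos. Qed.

Lemma hit_time_pos (A f a : R) : 0 < f -> a < A -> 0 < hit_time A f a.
Proof. intros. apply sqrt_lt_R0, Rdiv_lt_0_compat; lra. Qed.

Lemma hit_time_spec (A f a : R) : 0 < f -> a <= A ->
  a = A - f * hit_time A f a * hit_time A f a / 2.
Proof.
  intros Hf Ha. unfold hit_time. rewrite Rmult_assoc, sqrt_sqrt.
  - field. lra.
  - apply Rdiv_le_0_compat; lra.
Qed.

Lemma hit_time_fall (A f T : R) : 0 < f -> 0 <= T -> hit_time A f (A - f * T * T / 2) = T.
Proof.
  intros Hf HT. unfold hit_time.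
  replace (2 * (A - (A - f * T * T / 2)) / f) with (T * T) by (field; lra).
  apply sqrt_square, HT.
Qed.

(* Continuity induction in steps of fixed length, in place of a first time at
   which P fails (which need not exist). *)
Lemma stepping_induction (P : R -> Prop) (t0 dl : R) : 0 < dl -> P 0 ->
  (forall s u, 0 <= s <= u -> u <= t0 -> u <= s + dl -> (forall r, 0 <= r <= s -> P r) -> P u) ->
  forall u, 0 <= u <= t0 -> P u.
Proof.
  intros Hdl H0 Hstep.
  assert (Hn : forall n u, 0 <= u <= t0 -> u <= INR n * dl -> P u).
  { induction n as [| n IH]; intros u Hu Hun.
    - simpl in Hun. replace u with 0 by lra. exact H0.
    - destruct (Rle_dec u (INR n * dl)) as [Hle | Hgt]; [now apply IH |].
      pose proof (pos_INR n). rewrite S_INR in Hun.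
      apply (Hstep (INR n * dl)); try nra.
      intros r Hr. apply IH; lra. }
  intros u Hu. destruct (INR_archimed dl t0 Hdl) as [n Hn']. apply (Hn n); lra.
Qed.

Lemma Rabs_bounded_on_lt (g : nat -> R) (n : nat) :
  exists K, 0 < K /\ forall i, (i < n)%nat -> Rabs (g i) <= K.
Proof.
  induction n as [| n [K [HK HgK]]].
  - exists 1. split; [lra | intros i Hi; lia].
  - exists (Rmax K (Rabs (g n))). split; [apply Rlt_le_trans with (2 := Rmax_l _ _); exact HK |].
    intros i Hi. destruct (Nat.eq_dec i n) as [-> | Hin]; [apply Rmax_r |].
    apply Rle_trans with (2 := Rmax_l _ _), HgK. lia.
Qed.

Lemma exists_small_pos (r C b : R) : 0 < r -> 0 <= C -> 0 < b ->
  exists e, 0 < e < b /\ e * C < r.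
Proof.
  intros Hr HC Hb. exists (Rmin (b / 2) (r / (C + 1))).
  assert (He : 0 < Rmin (b / 2) (r / (C + 1))) by (apply Rmin_glb_lt; apply Rdiv_lt_0_compat; lra).
  pose proof (Rmin_l (b / 2) (r / (C + 1))). pose proof (Rmin_r (b / 2) (r / (C + 1))).
  split; [lra |].
  apply Rle_lt_trans with (r / (C + 1) * C).
  - apply Rmult_le_compat_r; lra.
  - apply Rmult_lt_reg_r with (C + 1); [lra |]. field_simplify; nra.
Qed.

Section Dynamics.

Variables (d : nat) (A : R) (F1 F2 : pt).
Local Notation D := (d - 1)%nat.
Hypotheses (HD : (D < d)%nat) (HF1 : 0 < F1 D) (HF2 : 0 <= F2 D).

Definition trajectory (x : pt) (t : R) : pt :=
  fun i => x i + pw_pos (F1 i) (F2 i) (hit_time A (F1 D) (x D)) t.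

Section Solution.

Variables (x : pt) (y v : R -> pt).
Hypothesis HxA : x D < A.
Hypothesis Hy : forall t, 0 <= t -> forall i, (i < d)%nat ->
  is_RInt (fun s => v s i) 0 t (y t i - x i) /\
  is_RInt (fun s => Fpw d A F1 F2 (y s) i) 0 t (v t i).

Local Notation T := (hit_time A (F1 D) (x D)).

Lemma pos_at_0 i : (i < d)%nat -> y 0 i = x i.
Proof.
  intros Hi. destruct (Hy 0 (Rle_refl 0) i Hi) as [H0 _].
  pose proof (is_RInt_eq _ _ _ _ _ H0 (is_RInt_point _ 0)) as E.
  simpl in E. unfold zero in E; simpl in E. lra.
Qed.

Lemma vel_last_bounds s : 0 <= s -> 0 <= v s D <= (F1 D + F2 D) * s.
Proof.
  intros Hs. destruct (Hy s Hs D HD) as [_ Hv].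
  assert (Hforce : forall r, 0 <= Fpw d A F1 F2 (y r) D <= F1 D + F2 D)
    by (intros r; unfold Fpw; destruct (Rlt_dec (y r D) A); lra).
  split.
  - apply (is_RInt_ge_0 _ 0 s _ Hs Hv). intros r _. apply Hforce.
  - replace ((F1 D + F2 D) * s) with ((F1 D + F2 D) * (s - 0)) by ring.
    apply (is_RInt_le _ _ 0 s _ _ Hs Hv (is_RInt_const_R _ 0 s)). intros r _. apply Hforce.
Qed.

Lemma pos_last_increment s1 s2 : 0 <= s1 <= s2 ->
  0 <= y s2 D - y s1 D <= (F1 D + F2 D) * s2 * (s2 - s1).
Proof.
  intros Hs. destruct (Hy s2 ltac:(lra) D HD) as [H2 _].
  destruct (is_RInt_split _ 0 s1 s2 _ Hs H2) as (l1 & l2 & I1 & I2 & E).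
  destruct (Hy s1 ltac:(lra) D HD) as [H1 _].
  rewrite (is_RInt_eq _ _ _ _ _ I1 H1) in E.
  assert (Hl2 : 0 <= l2 <= (F1 D + F2 D) * s2 * (s2 - s1)); [| lra].
  split.
  - apply (is_RInt_ge_0 _ s1 s2 _ ltac:(lra) I2). intros r Hr. apply vel_last_bounds; lra.
  - apply (is_RInt_le _ _ s1 s2 _ _ ltac:(lra) I2 (is_RInt_const_R _ s1 s2)).
    intros r Hr. pose proof (vel_last_bounds r ltac:(lra)). nra.
Qed.

Lemma pos_of_phases tau t i : (i < d)%nat -> 0 <= tau -> 0 <= t ->
  (forall s, 0 < s < t -> s < tau -> y s D < A) ->
  (forall s, 0 < s < t -> tau < s -> A <= y s D) ->
  y t i = x i + pw_pos (F1 i) (F2 i) tau t.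
Proof.
  intros Hi Htau Ht Hbelow Habove. destruct (Hy t Ht i Hi) as [Hpos _].
  assert (Hvel : forall u, 0 < u < t -> v u i = pw_vel (F1 i) (F2 i) tau u).
  { intros u Hu. destruct (Hy u ltac:(lra) i Hi) as [_ Hv].
    apply (is_RInt_step_fun (fun r => Fpw d A F1 F2 (y r) i) _ _ tau u _ Htau ltac:(lra)); [| | exact Hv];
      intros r Hr HrT; unfold Fpw.
    - destruct (Rlt_dec (y r D) A) as [| Hn]; [reflexivity |].
      exfalso; apply Hn, Hbelow; lra.
    - destruct (Rlt_dec (y r D) A) as [Hn |]; [| reflexivity].
      pose proof (Habove r ltac:(lra) HrT). lra. }
  pose proof (is_RInt_pw_vel _ _ _ tau t _ Htau Ht Hvel Hpos). lra.
Qed.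

Lemma pos_last_uniform_accel s : 0 <= s -> (forall u, 0 < u < s -> y u D < A) ->
  y s D = x D + F1 D * s * s / 2.
Proof.
  intros Hs Hbelow.
  rewrite (pos_of_phases s s D HD Hs Hs (fun u Hu _ => Hbelow u Hu)); [| intros u Hu Hsu; lra].
  unfold pw_pos. destruct (Rle_dec s s); [reflexivity | lra].
Qed.

Lemma below_interface_before_hit t0 : 0 <= t0 < T -> y t0 D < A.
Proof.
  intros Ht0.
  set (M := F1 D + F2 D).
  set (c := x D + F1 D * t0 * t0 / 2).
  assert (Hc : c < A).
  { pose proof (hit_time_spec A (F1 D) (x D) HF1 ltac:(lra)).
    assert (0 < F1 D * (T * T - t0 * t0)) by (apply Rmult_lt_0_compat; nra).
    unfold c. lra. }
  set (dl := (A - c) / (M * t0 + 1)).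
  assert (Hdl : 0 < dl) by (apply Rdiv_lt_0_compat; unfold M; nra).
  assert (Hgap : (M * t0 + 1) * dl = A - c) by (unfold dl; field; unfold M; nra).
  (* While below the interface the particle is uniformly accelerated, so its height stays
     below c; within one more step dl it then rises by less than A - c. *)
  apply (stepping_induction (fun u => y u D < A) t0 dl Hdl);
    [rewrite (pos_at_0 D HD); lra | | lra].
  intros s u Hsu Hut Hus Hbelow.
  assert (Hys : y s D <= c).
  { rewrite (pos_last_uniform_accel s ltac:(lra) (fun r Hr => Hbelow r ltac:(lra))).
    assert (0 <= F1 D * (t0 * t0 - s * s)) by (apply Rmult_le_pos; nra).
    unfold c. lra. }
  pose proof (pos_last_increment s u Hsu) as Hinc. fold M in Hinc.
  assert (HM : 0 <= M) by (unfold M; lra).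
  assert (M * u * (u - s) <= M * t0 * dl).
  { apply Rmult_le_compat; [apply Rmult_le_pos | | apply Rmult_le_compat_l |]; lra. }
  lra.
Qed.

Lemma above_interface_after_hit s : T <= s -> A <= y s D.
Proof.
  intros Hs. pose proof (hit_time_nonneg A (F1 D) (x D)).
  assert (HyT : y T D = A).
  { rewrite (pos_last_uniform_accel T) by (auto; intros u Hu; apply below_interface_before_hit; lra).
    pose proof (hit_time_spec A (F1 D) (x D) HF1 ltac:(lra)). lra. }
  pose proof (pos_last_increment T s ltac:(lra)). lra.
Qed.

Lemma solution_coords t : 0 <= t -> forall i, (i < d)%nat -> y t i = trajectory x t i.
Proof.
  intros Ht i Hi. apply (pos_of_phases T t i Hi (hit_time_nonneg _ _ _) Ht).
  - intros s Hs HsT. apply below_interface_before_hit. lra.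
  - intros s Hs HsT. apply above_interface_after_hit. lra.
Qed.

End Solution.

Lemma solution_eq_trajectory (x : pt) (y : R -> pt) : x D < A -> is_solution d A F1 F2 x y ->
  forall t, 0 <= t -> forall i, (i < d)%nat -> y t i = trajectory x t i.
Proof. intros HxA [v Hy]. exact (solution_coords x y v HxA Hy). Qed.

Lemma trajectory_injective (x1 x2 : pt) (t : R) : F1 D <= F2 D ->
  x1 D <= A -> x2 D <= A -> 0 <= t ->
  eqd d (trajectory x1 t) (trajectory x2 t) -> eqd d x1 x2.
Proof.
  intros Hf Hx1 Hx2 Ht Heq.
  set (T1 := hit_time A (F1 D) (x1 D)). set (T2 := hit_time A (F1 D) (x2 D)).
  assert (HT : T1 = T2).
  { pose proof (Heq D HD) as E. unfold trajectory in E. fold T1 T2 in E.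
    pose proof (hit_time_spec A (F1 D) (x1 D) HF1 Hx1) as E1. fold T1 in E1.
    pose proof (hit_time_spec A (F1 D) (x2 D) HF1 Hx2) as E2. fold T2 in E2.
    assert (P1 : 0 <= T1) by apply hit_time_nonneg.
    assert (P2 : 0 <= T2) by apply hit_time_nonneg.
    destruct (Rtotal_order T1 T2) as [Hlt | [Heq12 | Hgt]]; [exfalso | exact Heq12 | exfalso].
    - pose proof (pw_height_decreasing (F1 D) (F2 D) T1 T2 t HF1 Hf (conj P1 Hlt) Ht). lra.
    - pose proof (pw_height_decreasing (F1 D) (F2 D) T2 T1 t HF1 Hf (conj P2 Hgt) Ht). lra. }
  intros i Hi. pose proof (Heq i Hi) as E. unfold trajectory in E. fold T1 T2 in E.
  rewrite HT in E. lra.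
Qed.

Lemma shifted_pair_collides (x1 x2 : pt) (T0 eps t : R) :
  0 < eps < T0 -> T0 + eps < t -> (F1 D - F2 D) * (t - T0) = F1 D * T0 ->
  x1 D = A - F1 D * (T0 - eps) * (T0 - eps) / 2 ->
  (forall i, x2 i = x1 i + (pw_pos (F1 i) (F2 i) (T0 - eps) t - pw_pos (F1 i) (F2 i) (T0 + eps) t)) ->
  ~ eqd d x1 x2 /\ eqd d (trajectory x1 t) (trajectory x2 t).
Proof.
  intros Heps Ht Hcross Hx1 Hx2.
  assert (Hx2D : x2 D = A - F1 D * (T0 + eps) * (T0 + eps) / 2).
  { rewrite Hx2, Hx1.
    pose proof (pw_height_crossing (F1 D) (F2 D) T0 eps t ltac:(lra) Ht Hcross) as Hh. lra. }
  split.
  - intros Heq. pose proof (Heq D HD) as E. rewrite Hx1, Hx2D in E.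
    assert (0 < F1 D * T0 * eps) by (repeat apply Rmult_lt_0_compat; lra). lra.
  - intros i Hi. unfold trajectory. rewrite Hx1, Hx2D, !hit_time_fall by lra.
    rewrite Hx2. ring.
Qed.

Lemma trajectories_collide (x0 : pt) (r : R) : F2 D < F1 D -> x0 D < A -> 0 < r ->
  exists t x1 x2, 0 <= t /\ near_lt d x0 x1 r /\ near_lt d x0 x2 r /\ ~ eqd d x1 x2 /\
    eqd d (trajectory x1 t) (trajectory x2 t).
Proof.
  intros Hf Hx0 Hr.
  set (T0 := hit_time A (F1 D) (x0 D)).
  assert (HT0 : 0 < T0) by (apply hit_time_pos; auto).
  pose proof (hit_time_spec A (F1 D) (x0 D) HF1 ltac:(lra)) as Hx0T0. fold T0 in Hx0T0.
  set (t := T0 + F1 D * T0 / (F1 D - F2 D)).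
  assert (Hcross : (F1 D - F2 D) * (t - T0) = F1 D * T0) by (unfold t; field; lra).
  assert (HtT0 : T0 <= t - T0).
  { apply Rmult_le_reg_l with (F1 D - F2 D); [lra |]. rewrite Hcross.
    assert (0 <= F2 D * T0) by (apply Rmult_le_pos; lra). lra. }
  destruct (Rabs_bounded_on_lt (fun i => F2 i - F1 i) d) as (K & HK & HFK).
  assert (HC1 : 0 <= F1 D * T0) by (apply Rmult_le_pos; lra).
  assert (HC2 : 0 <= 2 * (t - T0) * K) by (apply Rmult_le_pos; lra).
  destruct (exists_small_pos r (F1 D * T0 + 2 * (t - T0) * K) T0 Hr ltac:(lra) HT0)
    as (eps & Heps & Hsmall).
  set (x1 := fun i => if Nat.eq_dec i D then A - F1 D * (T0 - eps) * (T0 - eps) / 2 else x0 i).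
  set (x2 := fun i => x1 i + (pw_pos (F1 i) (F2 i) (T0 - eps) t - pw_pos (F1 i) (F2 i) (T0 + eps) t)).
  assert (Hnear1 : forall i, (i < d)%nat -> Rabs (x1 i - x0 i) <= F1 D * T0 * eps).
  { intros i Hi. unfold x1. destruct (Nat.eq_dec i D) as [-> | Hne].
    - replace (A - F1 D * (T0 - eps) * (T0 - eps) / 2 - x0 D)
        with (F1 D * eps * (2 * T0 - eps) / 2) by (rewrite Hx0T0; field).
      assert (0 <= F1 D * eps) by (apply Rmult_le_pos; lra).
      rewrite Rabs_pos_eq by nra. nra.
    - rewrite Rminus_eq_0, Rabs_R0. apply Rmult_le_pos; lra. }
  assert (Hnear2 : forall i, (i < d)%nat -> Rabs (x2 i - x1 i) <= 2 * (t - T0) * K * eps).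
  { intros i Hi.
    replace (x2 i - x1 i)
      with (pw_pos (F1 i) (F2 i) (T0 - eps) t - pw_pos (F1 i) (F2 i) (T0 + eps) t) by (unfold x2; ring).
    apply Rabs_pw_pos_shift_diff; [lra | lra | apply HFK, Hi]. }
  assert (Hx1D : x1 D = A - F1 D * (T0 - eps) * (T0 - eps) / 2)
    by (unfold x1; destruct (Nat.eq_dec D D); [reflexivity | congruence]).
  destruct (shifted_pair_collides x1 x2 T0 eps t Heps ltac:(lra) Hcross Hx1D (fun i => eq_refl))
    as [Hne Hcoll].
  exists t, x1, x2. repeat split; [lra | | | exact Hne | exact Hcoll];
    intros i Hi; rewrite Rabs_minus_sym; pose proof (Hnear1 i Hi).
  - assert (0 <= 2 * (t - T0) * K * eps) by (apply Rmult_le_pos; lra). nra.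
  - pose proof (Hnear2 i Hi). pose proof (Rabs_triang (x2 i - x1 i) (x1 i - x0 i)).
    replace (x2 i - x0 i) with ((x2 i - x1 i) + (x1 i - x0 i)) by ring. nra.
Qed.

End Dynamics.

Lemma closure_d_self (d : nat) (O : pt -> Prop) (x : pt) : O x -> closure_d d O x.
Proof.
  intros Hx r Hr. exists x. split; [exact Hx |].
  intros i _. rewrite Rminus_eq_0, Rabs_R0. exact Hr.
Qed.

Theorem theorem6 (d : nat) (Hd : (0 < d)%nat) (A : R) (HA : 0 < A)
  (F1 F2 : pt) (HF1 : 0 < F1 (d - 1)%nat) (HF2 : 0 <= F2 (d - 1)%nat)
  (Omega : pt -> Prop)
  (HOopen : open_d d Omega) (HOconn : connected_d d Omega)
  (HOne : exists x, Omega x)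
  (HLam : forall x, closure_d d Omega x -> x (d - 1)%nat < A)
  (y : pt -> R -> pt)
  (Hy : forall x, closure_d d Omega x -> is_solution d A F1 F2 x (y x)) :
  (forall t x1 x2, 0 <= t ->
     closure_d d Omega x1 -> closure_d d Omega x2 ->
     ~ eqd d x1 x2 -> ~ eqd d (y x1 t) (y x2 t))
  <-> F1 (d - 1)%nat <= F2 (d - 1)%nat.
Proof.
  assert (HD : ((d - 1) < d)%nat) by lia.
  assert (Hcl : forall x, Omega x -> closure_d d Omega x) by (intros x; apply closure_d_self).
  assert (Htraj : forall x, closure_d d Omega x -> forall t, 0 <= t ->
            forall i, (i < d)%nat -> y x t i = trajectory d A F1 F2 x t i)
    by (intros x Hx; exact (solution_eq_trajectory d A F1 F2 HD HF1 HF2 x (y x) (HLam x Hx) (Hy x Hx))).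
  split.
  - intros Hnc. destruct (Rle_or_lt (F1 (d - 1)%nat) (F2 (d - 1)%nat)) as [Hle | Hlt]; [exact Hle | exfalso].
    destruct HOne as [x0 Hx0]. destruct (HOopen x0 Hx0) as (r & Hr & Hball).
    destruct (trajectories_collide d A F1 F2 HD HF1 HF2 x0 r Hlt (HLam x0 (Hcl x0 Hx0)) Hr)
      as (t & x1 & x2 & Ht & Hn1 & Hn2 & Hne & Hcoll).
    apply (Hnc t x1 x2 Ht (Hcl x1 (Hball x1 Hn1)) (Hcl x2 (Hball x2 Hn2)) Hne).
    intros i Hi. rewrite !Htraj by auto. apply Hcoll, Hi.
  - intros Hle t x1 x2 Ht Hx1 Hx2 Hne Heq. apply Hne.
    apply (trajectory_injective d A F1 F2 HD HF1 x1 x2 t Hle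
             (Rlt_le _ _ (HLam x1 Hx1)) (Rlt_le _ _ (HLam x2 Hx2)) Ht).
    intros i Hi. rewrite <- !Htraj by auto. apply Heq, Hi.
Qed.
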